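(* Let $l\ge 1$ and let $X_l,\dots,X_1$ be nonempty sets. Then the monoid $M(X_l)\circ\cdots\circ M(X_1)$ is isomorphic to the monoid $\mathrm{Ell}(r_0,T(|X_l|,\dots,|X_1|))$; an isomorphism is given by restricting an elliptic contraction to the set of leaves $X_l\times\cdots\times X_1$.
   Context: Rooted tree, depth, father/son and elliptic contraction: a rooted tree $(r_0,T)$ is a tree with a distinguished vertex $r_0$; $\mathrm{dep}(v)=d_T(r_0,v)$ (geodesic distance); an elliptic contraction is a map on vertices which does not increase geodesic distance and preserves depth. $\mathrm{Ell}(r_0,T)$ is the monoid of all elliptic contractions of $(r_0,T)$ into itself under composition (maps written on the right). $T(n_l,\dots,n_1)$ is the rooted uniformly branching tree of depth $l$ in which every vertex at depth $i-1$ has exactly $n_i$ sons; its vertex set is represented as $\{r_0\}\cup\bigcup_{i=1}^l X_i\times\cdots\times X_1$ with $|X_i|=n_i$, where $(x_i,\dots,x_1)$ is a son of $(x_{i-1},\dots,x_1)$ and each $(x_1)$ is a son of $r_0$. For $X=X_l\times\cdots\times X_1$, let $\pi_{[i,1]}:X\to X_i\times\cdots\times X_1$ be the projection on the last $i$ components. $M(X_l)\circ\cdots\circ M(X_1)$ denotes the monoid (under composition) of all full transformations $\varphi$ of $X_l\times\cdots\times X_1$ that are sequential: for every $i$, if $x,x'$ have the same last $i$ components then so do $x\varphi$ and $x'\varphi$. *)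

From mathcomp Require Import all_boot.
Set Implicit Arguments. Unset Strict Implicit. Unset Printing Implicit Defensive.

(* The sets X_l, ..., X_1 are given as predicates X l, ..., X 1 on a common
   carrier type A (any family of sets embeds into a disjoint union).
   A vertex of T(|X_l|,...,|X_1|) at depth k is the list [:: x_k; ...; x_1]
   with x_j \in X j; the root r0 is [::] and x :: s is a son of s. *)
Section UniformTree.
Variables (A : Type) (l : nat) (X : nat -> A -> Prop).

Fixpoint valid_path (s : seq A) : Prop :=
  match s with
  | [::] => True
  | a :: s' => X (size s').+1 a /\ valid_path s'
  end.

Definition is_vertex (s : seq A) : Prop := valid_path s /\ size s <= l.

Definition vertex := {s : seq A | is_vertex s}.

Definition root : vertex := exist is_vertex [::] (conj I (leq0n l)).

Definition adj (u v : vertex) : Prop :=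
  (exists a, sval u = a :: sval v) \/ (exists a, sval v = a :: sval u).

Inductive walk : nat -> vertex -> vertex -> Prop :=
| walk0 u : walk 0 u u
| walkS n u w v : adj u w -> walk n w v -> walk n.+1 u v.

Definition geodist (u v : vertex) (n : nat) : Prop :=
  walk n u v /\ forall m, walk m u v -> n <= m.

Definition dep (v : vertex) (n : nat) : Prop := geodist root v n.

Definition elliptic (f : vertex -> vertex) : Prop :=
  (forall u v n m, geodist u v n -> geodist (f u) (f v) m -> m <= n) /\
  (forall v n, dep v n -> dep (f v) n).

Definition leaf := {v : vertex | size (sval v) = l}.

(* sequential transformations of X_l x ... x X_1 ; drop (l - i) gives the
   last i components (x_i, ..., x_1) *)
Definition sequential (phi : leaf -> leaf) : Prop :=
  forall (i : nat) (x y : leaf),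
    drop (l - i) (sval (sval x)) = drop (l - i) (sval (sval y)) ->
    drop (l - i) (sval (sval (phi x))) = drop (l - i) (sval (sval (phi y))).

Definition restricts (f : vertex -> vertex) (phi : leaf -> leaf) : Prop :=
  forall x : leaf, sval (phi x) = f (sval x).

End UniformTree.

From Pilot Require Import Defs.
From mathcomp Require Import all_boot zify.
From Stdlib Require Import Wf_nat ProofIrrelevance Classical ClassicalEpsilon.
From Stdlib Require Import FunctionalExtensionality.

(* The distance between vertices u and v of the tree is
   depth u + depth v - 2 k, where k is the depth of their deepest common
   ancestor.  Hence elliptic contractions are exactly the depth-preserving maps
   sending vertices with a common ancestor at depth k to vertices with a common
   ancestor at depth k; on the leaves this is sequentiality.  An elliptic map f
   is determined by its leaves, since f v is the depth-(depth v) ancestor of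
   f x for any leaf x below v; conversely a sequential map extends by this very
   formula, sequentiality making the choice of x irrelevant. *)

Set Implicit Arguments. Unset Strict Implicit. Unset Printing Implicit Defensive.

(* Vertices are stored leaf-first, so the ancestor at depth k of s is its
   suffix of length k (all of s when k exceeds its size). *)
Definition anc {A : Type} (k : nat) (s : seq A) : seq A := drop (size s - k) s.

Section Ancestors.
Variable A : Type.
Implicit Types (s : seq A) (k : nat).

Lemma size_anc k s : size (anc k s) = minn k (size s).
Proof. rewrite size_drop; lia. Qed.

Lemma anc_size s : anc (size s) s = s.
Proof. by rewrite /anc subnn drop0. Qed.

Lemma anc_anc k k' s : anc k (anc k' s) = anc (minn k k') s.
Proof. rewrite /anc drop_drop size_drop; congr drop; lia. Qed.

Lemma anc_minn k s : anc (minn k (size s)) s = anc k s.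
Proof. by rewrite -anc_anc anc_size. Qed.

Lemma anc_descendant k s t :
  anc (size t) s = t -> anc k t = anc (minn k (size t)) s.
Proof. by move=> st; rewrite -{1}st anc_anc. Qed.

End Ancestors.

Lemma exists_least (P : nat -> Prop) :
  (exists n, P n) -> exists n, P n /\ forall m, P m -> n <= m.
Proof.
move=> /(dec_inh_nat_subset_has_unique_least_element _ (fun n => classic (P n))).
by case=> n [[Pn nmin] _]; exists n; split=> // m /nmin/leP.
Qed.

Section Tree.
Variables (A : Type) (l : nat) (X : nat -> A -> Prop).
Local Notation vertex := (vertex l X).
Local Notation walk := (@walk A l X).
Local Notation depth v := (size (sval v)).
Implicit Types (u v w : vertex) (f : vertex -> vertex).

Lemma vertex_inj u v : sval u = sval v -> u = v.
Proof.
by case: u v => s ps [t pt] /= est; subst t; rewrite (proof_irrelevance _ ps pt).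
Qed.

Lemma valid_path_drop n s : valid_path X s -> valid_path X (drop n s).
Proof. by elim: s n => [|a s IH] [|n] //= [_]; apply: IH. Qed.

Lemma is_vertex_drop n v : is_vertex l X (drop n (sval v)).
Proof.
case: v => s [vs sl]; split; first exact: valid_path_drop.
by rewrite size_drop (leq_trans (leq_subr _ _)).
Qed.

Definition vdrop n v : vertex := exist _ _ (is_vertex_drop n v).

Definition vanc k v : vertex := vdrop (depth v - k) v.

Lemma walk_cat n m u w v : walk n u w -> walk m w v -> walk (n + m) u v.
Proof. by elim=> // k x y z xy _ IH /IH; apply: walkS xy. Qed.

Lemma walk_rev n u v : walk n u v -> walk n v u.
Proof.
elim=> [x|k x y z xy _ IH]; first exact: walk0.
rewrite -addn1; apply: walk_cat IH (walkS _ (walk0 x)).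
by case: xy; [right | left].
Qed.

Lemma walk_drop j u : j <= depth u -> walk j u (vdrop j u).
Proof.
elim: j u => [|j IH] u ju.
  by rewrite (_ : vdrop 0 u = u); [exact: walk0 | apply: vertex_inj; rewrite /= drop0].
case: u ju => [[|a s] ps] //= js; have [[_ vs] sl] := ps.
pose w : vertex := exist _ s (conj vs (ltnW sl)).
apply: (@walkS _ _ _ _ _ w); first by left; exists a.
by rewrite (_ : vdrop _ _ = vdrop j w); [exact: IH | apply: vertex_inj].
Qed.

Lemma walk_vanc k u : walk (depth u - k) u (vanc k u).
Proof. exact/walk_drop/leq_subr. Qed.

(* Along each edge of a walk the common ancestor of the endpoints moves by at
   most one level, so a walk of length m passes through a common ancestor. *)
Lemma walk_common_anc m u v : walk m u v ->
  exists k, [/\ k <= depth u, k <= depth v, anc k (sval u) = anc k (sval v)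
              & (depth u - k) + (depth v - k) <= m].
Proof.
elim=> [x|n x w y xw _ [k [kw ky ewy len]]].
  by exists (depth x); rewrite subnn addn0.
case: xw => [[a ex]|[a ew]].
- exists k; rewrite /anc ex /= in ewy *; split=> //; try lia.
  by rewrite subSn // -ewy.
- rewrite /anc ew /= in kw ewy len.
  have [kx|kx] := leqP k (depth x).
    by exists k; split=> //; [rewrite /anc -ewy subSn | lia].
  have {}kx : k = (depth x).+1 by lia.
  exists (depth x); split; [by [] | lia | | lia].
  have ex : sval x = drop (depth y - depth x) (sval y).
    move/(congr1 (drop 1)): ewy; rewrite kx subnn /= !drop0 drop_drop => e.
    by rewrite {1}e; congr drop; lia.
  by rewrite anc_size {1}ex.
Qed.

Lemma common_anc_walk k u v :
  anc k (sval u) = anc k (sval v) -> walk ((depth u - k) + (depth v - k)) u v.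
Proof.
move=> euv; apply: walk_cat (walk_vanc k u) _.
by rewrite (_ : vanc k u = vanc k v); [exact/walk_rev/walk_vanc | apply: vertex_inj].
Qed.

Lemma walk_root v : walk (depth v) (Defs.root l X) v.
Proof.
apply: walk_rev; rewrite (_ : Defs.root l X = vdrop (depth v) v); first exact: walk_drop.
by apply: vertex_inj; rewrite /= drop_size.
Qed.

Lemma walk_via_root u v : walk (depth u + depth v) u v.
Proof. exact: walk_cat (walk_rev (walk_root u)) (walk_root v). Qed.

Lemma geodist_exists u v : exists n, geodist u v n.
Proof.
have [n [uv nmin]] := exists_least (ex_intro (fun n => walk n u v) _ (walk_via_root u v)).
by exists n.
Qed.

Lemma depE v n : dep v n <-> n = depth v.
Proof.
have walk_len m : walk m (Defs.root l X) v -> depth v <= m.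
  by case/walk_common_anc=> k [/= k0 _ _]; lia.
split=> [[rv vmin] | ->]; last by split; [exact: walk_root | exact: walk_len].
by apply/eqP; rewrite eqn_leq vmin ?walk_len //; exact: walk_root.
Qed.

Section Elliptic.
Variable f : vertex -> vertex.
Hypothesis ell_f : elliptic f.

Lemma elliptic_size v : depth (f v) = depth v.
Proof. by case: ell_f => _ /(_ v) dep_f; apply/esym/depE/dep_f/depE. Qed.

Lemma elliptic_walk n u v : walk n u v -> exists2 m, m <= n & walk m (f u) (f v).
Proof.
move=> uv; have [d [ud dmin]] := geodist_exists u v.
have [e [fe emin]] := geodist_exists (f u) (f v).
by exists e => //; rewrite (leq_trans (ell_f.1 _ _ _ _ (conj ud dmin) (conj fe emin))) ?dmin.
Qed.

Lemma elliptic_anc k u v :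
  anc k (sval u) = anc k (sval v) -> anc k (sval (f u)) = anc k (sval (f v)).
Proof.
move=> euv; set k0 := minn k (depth u).
have k0v : k0 = minn k (depth v) by rewrite /k0 -!size_anc euv.
have [m len fuv] := elliptic_walk (common_anc_walk euv).
have [k' []] := walk_common_anc fuv; rewrite !elliptic_size => ku kv e' len'.
have kk' : minn k0 k' = k0 by apply/minn_idPl; rewrite /k0; lia.
rewrite -(anc_minn k) -[in RHS](anc_minn k) !elliptic_size -/k0 -k0v.
by rewrite -kk' -!anc_anc e'.
Qed.

Lemma elliptic_ancestor w v :
  anc (depth v) (sval w) = sval v -> sval (f v) = anc (depth v) (sval (f w)).
Proof.
move=> wv; rewrite (elliptic_anc (v := v)) ?anc_size //.
by rewrite -(elliptic_size v) anc_size.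
Qed.

End Elliptic.

Lemma elliptic_of_anc f : (forall v, depth (f v) = depth v) ->
  (forall k u v, anc k (sval u) = anc k (sval v) -> anc k (sval (f u)) = anc k (sval (f v))) ->
  elliptic f.
Proof.
move=> size_f anc_f; split=> [u v n m [uv _] [_ fmin] | v n /depE ->]; last first.
  by apply/depE; rewrite size_f.
have [k [_ _ euv len]] := walk_common_anc uv.
apply: leq_trans (fmin _ _) len; rewrite -(size_f u) -(size_f v).
exact/common_anc_walk/anc_f.
Qed.

End Tree.

Section Leaves.
Variables (A : Type) (l : nat) (X : nat -> A -> Prop).
Hypothesis X_nonempty : forall i, 0 < i <= l -> exists a, X i a.
Local Notation vertex := (vertex l X).
Local Notation leaf := (leaf l X).
Local Notation depth v := (size (sval v)).
Local Notation word x := (sval (sval x)).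

Lemma leaf_inj (x y : leaf) : word x = word y -> x = y.
Proof.
case: x y => [u ul] [v vl] /= /vertex_inj euv; subst v.
by rewrite (proof_irrelevance _ ul vl).
Qed.

Lemma anc_leaf (x : leaf) : anc l (word x) = word x.
Proof. by rewrite /anc (svalP x) subnn drop0. Qed.

Lemma sequential_anc (phi : leaf -> leaf) : sequential phi <->
  forall i x y, anc i (word x) = anc i (word y) -> anc i (word (phi x)) = anc i (word (phi y)).
Proof.
have leaf_anc (x : leaf) i : anc i (word x) = drop (l - i) (word x).
  by rewrite /anc (svalP x).
split=> seq_phi i x y; first by rewrite !leaf_anc => /seq_phi.
by rewrite -!leaf_anc => /seq_phi.
Qed.

Lemma valid_path_extend n s : valid_path X s -> size s + n <= l ->
  exists t, [/\ valid_path X t, size t = size s + n & drop n t = s].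
Proof.
move=> vs; elim: n => [|n IH] sn; first by exists s; rewrite addn0 drop0.
have [|t [vt st ts]] := IH; first lia.
have [|a Xa] := X_nonempty (i := (size t).+1); first lia.
by exists (a :: t); split=> //=; rewrite st ?addnS in Xa *.
Qed.

Lemma exists_leaf_above (v : vertex) : exists x : leaf, anc (depth v) (word x) = sval v.
Proof.
have [vv vl] := svalP v.
have [|t [vt st tv]] := valid_path_extend (n := l - depth v) vv; first lia.
have tl : size t = l by lia.
pose w : vertex := exist _ t (conj vt (eq_leq tl)).
exists (exist (fun w : vertex => depth w = l) w tl).
by rewrite /anc /= st addKn.
Qed.

Lemma elliptic_restriction (f : vertex -> vertex) : elliptic f ->
  exists phi : leaf -> leaf, restricts f phi /\ sequential phi.
Proof.
move=> ell_f; have leaf_f (x : leaf) : depth (f (sval x)) = l.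
  by rewrite elliptic_size //; case: x.
exists (fun x => exist (fun w : vertex => depth w = l) _ (leaf_f x)); split=> //.
by apply/sequential_anc=> i x y; apply: elliptic_anc.
Qed.

Lemma elliptic_restriction_inj (f g : vertex -> vertex) (phi : leaf -> leaf) :
  elliptic f -> elliptic g -> restricts f phi -> restricts g phi -> f = g.
Proof.
move=> ell_f ell_g f_phi g_phi; apply: functional_extensionality => v.
have [x xv] := exists_leaf_above v.
apply: vertex_inj; rewrite (elliptic_ancestor ell_f xv) (elliptic_ancestor ell_g xv).
by rewrite -f_phi -g_phi.
Qed.

Lemma sequential_extension (phi : leaf -> leaf) : sequential phi ->
  exists f : vertex -> vertex, elliptic f /\ restricts f phi.
Proof.
move=> /sequential_anc seq_phi.
pose below v := proj1_sig (constructive_indefinite_description _ (exists_leaf_above v)).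
have belowP v : anc (depth v) (word (below v)) = sval v.
  exact: proj2_sig (constructive_indefinite_description _ (exists_leaf_above v)).
pose f v := vanc (depth v) (sval (phi (below v))).
have size_f v : depth (f v) = depth v.
  by rewrite size_anc (svalP (phi _)); apply/minn_idPl; case: (svalP v).
exists f; split.
  apply: elliptic_of_anc => // k u v euv.
  have k_uv : minn k (depth u) = minn k (depth v) by rewrite -!size_anc euv.
  rewrite /= !anc_anc -k_uv; apply: seq_phi.
  by rewrite -(anc_descendant k (belowP u)) k_uv -(anc_descendant k (belowP v)).
move=> x; apply: vertex_inj.
have below_x : below (sval x) = x.
  by apply: leaf_inj; rewrite -[RHS](belowP (sval x)) (svalP x) anc_leaf.
by rewrite /f /= below_x (svalP (phi x)) (svalP x) subnn drop0.
Qed.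

End Leaves.

Theorem proposition3p4 (A : Type) (l : nat) (X : nat -> A -> Prop) :
  0 < l ->
  (forall i, 0 < i <= l -> exists a, X i a) ->
  [/\ forall f : vertex l X -> vertex l X, elliptic f ->
        exists phi : leaf l X -> leaf l X, restricts f phi /\ sequential phi,
      forall phi : leaf l X -> leaf l X, sequential phi ->
        exists f : vertex l X -> vertex l X, elliptic f /\ restricts f phi,
      forall (f g : vertex l X -> vertex l X) (phi : leaf l X -> leaf l X),
        elliptic f -> elliptic g -> restricts f phi -> restricts g phi -> f = g,
      restricts (@id (vertex l X)) (@id (leaf l X)) &
      forall (f g : vertex l X -> vertex l X) (phi psi : leaf l X -> leaf l X),
        elliptic f -> elliptic g ->
        restricts f phi -> restricts g psi -> restricts (g \o f) (psi \o phi)].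
Proof.
move=> _ X_nonempty; split.
- exact: elliptic_restriction.
- exact: sequential_extension.
- exact: elliptic_restriction_inj.
- by [].
- by move=> f g phi psi _ _ f_phi g_psi x /=; rewrite g_psi f_phi.
Qed.
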